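(* Let $G$ be a graph on $d+2$ vertices and $k>1$, and suppose there exist a nonzero vector $w \in \mathbf{1}^{\perp}$ and a real number $\gamma$ with $B_G(k) w = \gamma \mathbf{1}$. Then $\det(xJ + B_G(k))$ is the zero polynomial in $x$ if and only if $\det(B_G(k)) = 0$.
   Context: Graphs are finite and simple with vertices labeled $1,\dots,d+2$. $B_G(k)$ is the $(d+2)\times(d+2)$ matrix with $b_{ii}=0$, $b_{ij}=-1$ for non-adjacent $i\neq j$, $b_{ij}=-k^2$ for adjacent $i,j$. $J$ is the all-ones matrix, $\mathbf{1}$ the all-ones vector and $\mathbf{1}^{\perp}$ its orthogonal complement. *)

From mathcomp Require Import all_boot all_order all_algebra.
Set Implicit Arguments. Unset Strict Implicit. Unset Printing Implicit Defensive.
Import Order.TTheory GRing.Theory Num.Theory.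
Local Open Scope ring_scope.

(* A finite simple graph on vertex set 'I_n (vertices 1..n of the paper are
   the ordinals 0..n-1): a symmetric irreflexive adjacency relation. *)
Definition simple_graph (n : nat) (adj : rel 'I_n) : Prop :=
  (forall i j, adj i j = adj j i) /\ (forall i, adj i i = false).

Definition BG (R : nzRingType) (n : nat) (adj : rel 'I_n) (k : R) : 'M[R]_n :=
  \matrix_(i, j) (if i == j then 0 else if adj i j then - k ^+ 2 else -1).

Definition detxJB (R : comNzRingType) (n : nat) (B : 'M[R]_n) : {poly R} :=
  \det ('X *: const_mx 1 + map_mx polyC B).

From mathcomp Require Import all_boot all_order all_algebra.
Import Order.TTheory GRing.Theory Num.Theory.
Local Open Scope ring_scope.

(* Evaluating det(xJ + B) at x = 0 gives det B, so one direction is trivial.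
   Conversely, if det B = 0, a common null vector of B and J in the ground
   ring is also a null vector of xJ + B over the polynomials.  If gamma = 0
   then w itself, transposed, is one.  Otherwise any left null vector v of B
   satisfies gamma (v 1) = v B w = 0, so v has coordinate sum 0 and v J = 0.
   Neither the graph structure nor k > 1 plays any role: this holds for any
   square matrix over an integral domain. *)

Lemma mulmx_const1 {R : pzSemiRingType} {m n p} (A : 'M[R]_(m, n)) :
  A *m (const_mx 1 : 'M_(n, p)) = \matrix_(i, j) \sum_l A i l.
Proof.
by apply/matrixP => i j; rewrite !mxE; apply: eq_bigr => l _; rewrite mxE mulr1.
Qed.

Lemma detxJB_horner0 {R : comNzRingType} {n} (B : 'M[R]_n) :
  (detxJB B).[0] = \det B.
Proof.
rewrite /detxJB -horner_evalE -det_map_mx; congr (\det _).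
by apply/matrixP => i j; rewrite !mxE /= horner_evalE !hornerE.
Qed.

Lemma detxJB_tr {R : comNzRingType} {n} (B : 'M[R]_n) : detxJB B^T = detxJB B.
Proof. by rewrite /detxJB -det_tr linearD linearZ /= trmx_const map_trmx trmxK. Qed.

Lemma detxJB_eq0_left_kernel {R : idomainType} {n} (B : 'M[R]_n) (v : 'rV_n) :
  v != 0 -> v *m B = 0 -> v *m (const_mx 1 : 'M_n) = 0 -> detxJB B = 0.
Proof.
move=> nz_v vB0 vJ0; apply/eqP/det0P; exists (map_mx polyC v).
  apply: contraNneq nz_v => /matrixP v0; apply/eqP/matrixP => i j.
  by have := v0 i j; rewrite !mxE => /polyC_inj.
have -> : const_mx 1 = map_mx polyC (const_mx 1 : 'M[R]_n) by rewrite map_const_mx.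
rewrite mulmxDr -scalemxAr -!map_mxM vJ0 vB0.
by rewrite !map_mx0 scaler0 addr0.
Qed.

Lemma detxJB_eq0 {R : idomainType} {n} (B : 'M[R]_n) (w : 'cV_n) (gamma : R) :
  w != 0 -> \sum_i w i ord0 = 0 -> B *m w = gamma *: const_mx 1 ->
  \det B = 0 -> detxJB B = 0.
Proof.
move=> nz_w sum_w0 Bw detB0.
have [gamma0 | nz_gamma] := eqVneq gamma 0.
  rewrite -detxJB_tr; apply: (detxJB_eq0_left_kernel B^T w^T).
  - by rewrite trmx_eq0.
  - by rewrite -trmx_mul Bw gamma0 scale0r trmx0.
  rewrite mulmx_const1; apply/matrixP => i j; rewrite !mxE -[RHS]sum_w0.
  by apply: eq_bigr => l _; rewrite mxE (ord1 i).
have [v nz_v vB0] : exists2 v : 'rV_n, v != 0 & v *m B = 0 by apply/det0P/eqP.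
apply: (detxJB_eq0_left_kernel B v nz_v vB0).
have v1_0 : v *m (const_mx 1 : 'cV_n) = 0.
  have : gamma *: (v *m const_mx 1) = 0 :> 'M_1.
    by rewrite scalemxAr -Bw mulmxA vB0 mul0mx.
  by move/eqP; rewrite scalemx_eq0 (negbTE nz_gamma) => /eqP.
rewrite mulmx_const1; apply/matrixP => i j.
by move/matrixP/(_ i ord0): v1_0; rewrite mulmx_const1 !mxE.
Qed.

Theorem lemma3p5 (R : realFieldType) (d : nat) (adj : rel 'I_(d.+2)) (k : R) :
  simple_graph adj -> 1 < k ->
  (exists (w : 'cV[R]_(d.+2)) (gamma : R),
      w != 0 /\ \sum_i w i ord0 = 0 /\
      BG adj k *m w = gamma *: const_mx 1) ->
  (detxJB (BG adj k) = 0 <-> \det (BG adj k) = 0).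
Proof.
move=> _ _ [w [gamma [nz_w [sum_w0 Bw]]]]; split.
  by move=> detxJB0; rewrite -detxJB_horner0 detxJB0 horner0.
exact: detxJB_eq0 nz_w sum_w0 Bw.
Qed.
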